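(* Let $(\mathcal{G},S)$ be an instance of \textsc{Temporally Disjoint Walks} where $\mathcal{G}$ is a temporal line, and let $\mathcal{S}$ be a solution (a family of pairwise temporally disjoint temporal $(s_i,z_i)$-walks, one for each $(s_i,z_i)\in S$) that minimizes the sum of the lengths of its walks among all solutions. Let $W\in\mathcal{S}$ be a temporal $(s,z)$-walk in which the transitions $(a,b,t),(b,a,t')$ with $t<t'$ are consecutive. Then there exists a temporal $(s',z')$-walk $W'$ in $\mathcal{S}$ that contains a transition $(c,a,t'')$ or $(a,c,t'')$ for some vertex $c$ and some $t''$ with $t<t''<t'$.
   Context: A temporal graph $\mathcal{G}=(V,E_1,\ldots,E_T)$ has vertex set $V$ and edge sets $E_1,\ldots,E_T\subseteq\binom{V}{2}$; it is a temporal line if its underlying graph $(V,\bigcup_i E_i)$ is a path. A temporal $(s,z)$-walk of length $k$ from $s=v_0$ to $z=v_k$ is a sequence of transitions $((v_{i-1},v_i,t_i))_{i=1}^k$ with $\{v_{i-1},v_i\}\in E_{t_i}$ and $t_1<\cdots<t_k$. It occupies $v_i$ during $[t_i,t_{i+1}]$ for $i\in[k-1]$, $v_0$ during $[t_1,t_1]$ and $v_k$ during $[t_k,t_k]$. Two temporal walks are temporally disjoint unless some vertex is occupied by both during intersecting time intervals. \textsc{Temporally Disjoint Walks} asks, given $\mathcal{G}$ and a multiset $S\subseteq V\times V$ of source-sink pairs, for pairwise temporally disjoint temporal $(s_i,z_i)$-walks, one for each $(s_i,z_i)\in S$. *)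

From mathcomp Require Import all_boot.
Set Implicit Arguments. Unset Strict Implicit. Unset Printing Implicit Defensive.

(* A temporal graph on the finite vertex type V with lifetime T is given by
   edge sets E 1, ..., E T (values E t for t outside [1,T] are ignored);
   each edge is a 2-element subset of V. *)
Definition temporal_graph (V : finType) (T : nat) (E : nat -> {set {set V}}) : Prop :=
  forall t e, 1 <= t <= T -> e \in E t -> #|e| = 2.

Definition underlying_edge (V : finType) (T : nat) (E : nat -> {set {set V}}) (x y : V) : Prop :=
  exists t, 1 <= t <= T /\ [set x; y] \in E t.

Definition adjacent_in (V : eqType) (p : seq V) (x y : V) : Prop :=
  exists i, i.+1 < size p /\
    ((nth x p i = x /\ nth x p i.+1 = y) \/ (nth x p i = y /\ nth x p i.+1 = x)).

Definition temporal_line (V : finType) (T : nat) (E : nat -> {set {set V}}) : Prop :=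
  temporal_graph T E /\
  exists p : seq V, uniq p /\ (forall x, x \in p) /\
    (forall x y, underlying_edge T E x y <-> adjacent_in p x y).

Definition transition (V : finType) := (V * V * nat)%type.
Definition tr_src (V : finType) (x : transition V) : V := x.1.1.
Definition tr_tgt (V : finType) (x : transition V) : V := x.1.2.
Definition tr_time (V : finType) (x : transition V) : nat := x.2.

Definition temporal_walk (V : finType) (T : nat) (E : nat -> {set {set V}})
    (s z : V) (w : seq (transition V)) : Prop :=
  match w with
  | [::] => s = z
  | x0 :: _ =>
      tr_src x0 = s /\ tr_tgt (last x0 w) = z /\
      (forall i, i < size w ->
         [set tr_src (nth x0 w i); tr_tgt (nth x0 w i)] \in E (tr_time (nth x0 w i))
         /\ 1 <= tr_time (nth x0 w i) <= T) /\
      (forall i, i.+1 < size w ->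
         tr_tgt (nth x0 w i) = tr_src (nth x0 w i.+1) /\
         tr_time (nth x0 w i) < tr_time (nth x0 w i.+1))
  end.

(* Occupation list: triples (v, lo, hi) meaning the walk occupies v during
   [lo, hi]: v_0 during [t_1,t_1], v_i during [t_i,t_{i+1}] (1 <= i <= k-1),
   v_k during [t_k,t_k].  The empty walk occupies nothing. *)
Definition occupation (V : finType) (w : seq (transition V)) : seq (V * nat * nat) :=
  match w with
  | [::] => [::]
  | x0 :: _ =>
      (tr_src x0, tr_time x0, tr_time x0) ::
      [seq (tr_tgt (nth x0 w i), tr_time (nth x0 w i), tr_time (nth x0 w i.+1))
         | i <- iota 0 (size w).-1] ++
      [:: (tr_tgt (last x0 w), tr_time (last x0 w), tr_time (last x0 w))]
  end.

Definition temporally_disjoint (V : finType) (w1 w2 : seq (transition V)) : Prop :=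
  forall o1 o2, o1 \in occupation w1 -> o2 \in occupation w2 ->
    o1.1.1 = o2.1.1 -> ~ (o1.1.2 <= o2.2 /\ o2.1.2 <= o1.2).

(* A solution of Temporally Disjoint Walks for the (multi)set S of pairs,
   given as a list: walk number i is a temporal (s_i, z_i)-walk. *)
Definition tdw_solution (V : finType) (T : nat) (E : nat -> {set {set V}})
    (S : seq (V * V)) (sol : seq (seq (transition V))) : Prop :=
  size sol = size S /\
  (forall sz w, (sz, w) \in zip S sol -> temporal_walk T E sz.1 sz.2 w) /\
  (forall i j, i < size S -> j < size S -> i <> j ->
     temporally_disjoint (nth [::] sol i) (nth [::] sol j)).

Definition total_length (V : finType) (sol : seq (seq (transition V))) : nat :=
  sumn (map size sol).

From mathcomp Require Import all_boot zify.
Set Implicit Arguments. Unset Strict Implicit. Unset Printing Implicit Defensive.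

(* If no walk of the solution touches a strictly between t and t', the return
   trip (a, b, t), (b, a, t') can be cut out of W: the walker just waits at a
   from its arrival until its next departure.  Every occupation of the
   shortened walk is one of W, except that a is now also occupied during
   (t, t').  Another walk occupying a at such a time either was at a already
   at time t, where it meets W, or arrived at a during (t, t'), which is
   excluded.  So the shortened family is still a solution, two transitions
   shorter, contradicting minimality. *)

Lemma cat_take_nth2_drop (A : Type) (x0 : A) (s : seq A) k :
  k.+1 < size s -> s = take k s ++ nth x0 s k :: nth x0 s k.+1 :: drop k.+2 s.
Proof.
by move=> lt_k; rewrite -(drop_nth x0 lt_k) -(drop_nth x0 (ltnW lt_k)) cat_take_drop.
Qed.

Section TemporalWalks.
Variables (V : finType) (T : nat) (E : nat -> {set {set V}}).

Definition step (x y : transition V) : bool :=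
  (tr_tgt x == tr_src y) && (tr_time x < tr_time y).

Definition valid_transition (x : transition V) : bool :=
  ([set tr_src x; tr_tgt x] \in E (tr_time x)) && (1 <= tr_time x <= T).

Definition touches (v : V) (x : transition V) : bool :=
  (tr_src x == v) || (tr_tgt x == v).

(* The fictitious transition (s, s, 0) enters s before any real time step,
   so a walk from s is a [step]-path starting at it. *)
Lemma temporal_walkE s z w :
  temporal_walk T E s z w <->
  [/\ all valid_transition w, path step (s, s, 0) w & tr_tgt (last (s, s, 0) w) = z].
Proof.
case: w => [|x r]; first by split=> [-> | []].
split=> [[<- [<- [valid_at step_at]]] | [/(all_nthP x) valid_at]].
  split=> //; first by apply/(all_nthP x) => j lt_j; apply/andP; exact: valid_at.
  rewrite /= /step eqxx /=; have [_ /andP[-> _]] := valid_at 0 isT.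
  by apply/(pathP x) => j lt_j; have [-> ->] := step_at j lt_j; rewrite eqxx.
rewrite /= /step => /andP[/andP[/eqP <- _] /(pathP x) step_at] <-.
split=> //; split=> //; split=> j lt_j; first by have /andP[] := valid_at j lt_j.
by have /andP[/eqP] := step_at j lt_j.
Qed.

Lemma path_cut2 (A : Type) (e : rel A) x p y1 y2 q :
  (forall u v, e u y1 -> e y1 y2 -> e y2 v -> e u v) ->
  path e x (p ++ y1 :: y2 :: q) -> path e x (p ++ q).
Proof.
move=> e_through; rewrite !cat_path /= => /and4P[-> e1 e12].
by case: q => [|v q] //= /andP[e2 ->]; rewrite (e_through _ _ e1 e12 e2).
Qed.

(* [stays e w] lists the occupation intervals of the walk w for a walker
   who entered its current vertex by the transition e. *)
Fixpoint stays (e : transition V) (w : seq (transition V)) : seq (V * nat * nat) :=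
  if w is x :: r then (tr_tgt e, tr_time e, tr_time x) :: stays x r
  else [:: (tr_tgt e, tr_time e, tr_time e)].

Lemma stays_nth (d x : transition V) r :
  stays x r =
  [seq (tr_tgt (nth d (x :: r) i), tr_time (nth d (x :: r) i), tr_time (nth d r i))
     | i <- iota 0 (size r)] ++ [:: (tr_tgt (last x r), tr_time (last x r), tr_time (last x r))].
Proof.
elim: r x => [|y r IH] x //=; congr (_ :: _).
by rewrite IH -[1]addn0 iotaDl -map_comp.
Qed.

Lemma occupation_stays x r :
  occupation (x :: r) = stays (tr_src x, tr_src x, tr_time x) (x :: r).
Proof. by rewrite /= (stays_nth x). Qed.

Definition occupied (occ : seq (V * nat * nat)) (v : V) (tau : nat) : bool :=
  has (fun o => (o.1.1 == v) && (o.1.2 <= tau <= o.2)) occ.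

Lemma occupied_cons o occ v tau :
  occupied (o :: occ) v tau = ((o.1.1 == v) && (o.1.2 <= tau <= o.2)) || occupied occ v tau.
Proof. by []. Qed.

Lemma stays_ordered e (w : seq (transition V)) :
  path (fun x y => tr_time x <= tr_time y) e w -> all (fun o => o.1.2 <= o.2) (stays e w).
Proof. by elim: w e => [|x r IH] e /=; rewrite ?leqnn // => /andP[-> /IH]. Qed.

Lemma occupation_ordered s z w :
  temporal_walk T E s z w -> all (fun o => o.1.2 <= o.2) (occupation w).
Proof.
case: w => [|x r] // /temporal_walkE[_ /andP[_ hpath] _].
rewrite occupation_stays; apply: stays_ordered; rewrite /= leqnn.
by apply: sub_path hpath => u v /andP[_ /ltnW].
Qed.

Lemma mem_stays e (w : seq (transition V)) o :
  o \in stays e w -> (o.1.1, o.1.2) \in [seq (tr_tgt x, tr_time x) | x <- e :: w].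
Proof.
elim: w e => [|x r IH] e; first by rewrite inE => /eqP ->; rewrite inE.
rewrite inE => /orP[/eqP -> | /IH in_r]; first by rewrite inE eqxx.
by rewrite map_cons in_cons in_r orbT.
Qed.

Lemma occupation_entry (w : seq (transition V)) o :
  o \in occupation w -> exists2 x, x \in w & (tr_time x == o.1.2) && touches o.1.1 x.
Proof.
case: w => [|x r] //; rewrite occupation_stays => /mem_stays.
rewrite map_cons in_cons => /orP[/eqP [-> ->] | /mapP[y y_w [-> ->]]].
  by exists x; rewrite ?inE ?eqxx //= /touches eqxx.
by exists y => //; rewrite /touches !eqxx orbT.
Qed.

Lemma occupied_stays_entry (e e' x : transition V) r u tau :
  tr_tgt e = tr_tgt e' -> tr_time e' <= tr_time e ->
  occupied (stays e (x :: r)) u tau -> occupied (stays e' (x :: r)) u tau.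
Proof.
move=> same_v earlier; rewrite !occupied_cons /= -same_v.
case/orP=> [/andP[-> /andP[lo ->]] | ->]; last by rewrite orbT.
by rewrite (leq_trans earlier lo).
Qed.

Lemma occupied_stays_cat (e x : transition V) p r :
  tr_time (last e p) <= tr_time x ->
  occupied (stays e (p ++ x :: r)) (tr_tgt (last e p)) (tr_time x).
Proof.
elim: p e => [|y p IH] e lex; first by rewrite occupied_cons eqxx lex leqnn.
by rewrite occupied_cons IH ?orbT.
Qed.

Lemma occupied_stays_cut (e : transition V) (p q : seq (transition V)) a b t t' u tau :
  tr_tgt (last e p) = a -> tr_time (last e p) <= t ->
  occupied (stays e (p ++ q)) u tau ->
  occupied (stays e (p ++ (a, b, t) :: (b, a, t') :: q)) u tau
  || [&& u == a, t < tau & tau < t'].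
Proof.
elim: p e => [|x p IH] e; last first.
  move=> to_a before_t; rewrite !occupied_cons -orbA.
  by case/orP=> [-> // | /(IH _ to_a before_t) ->]; rewrite orbT.
move=> /= e_a before_t; case: q => [|y q]; rewrite !occupied_cons /= e_a.
  by rewrite orbF => /andP[-> /andP[lo hi]]; rewrite lo (leq_trans hi before_t).
case/orP=> [/andP[/eqP <- /andP[lo hi]] | ->]; last by rewrite !orbT.
rewrite eqxx lo hi /=; case: (leqP tau t) => //= t_tau.
by case: (leqP t' tau) => [_ | tau_t']; rewrite ?orbT.
Qed.

Lemma occupied_disjoint (w1 w2 : seq (transition V)) v tau :
  temporally_disjoint w1 w2 ->
  occupied (occupation w1) v tau -> ~~ occupied (occupation w2) v tau.
Proof.
move=> disj /hasP[o1 o1_w1 /andP[/eqP v1 /andP[lo1 hi1]]].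
apply/hasP=> -[o2 o2_w2 /andP[/eqP v2 /andP[lo2 hi2]]].
apply: (disj o1 o2 o1_w1 o2_w2); first by rewrite v1 v2.
by split; [exact: leq_trans lo1 hi2 | exact: leq_trans lo2 hi1].
Qed.

Lemma occupied_temporally_disjoint (w1 w2 : seq (transition V)) :
  all (fun o => o.1.2 <= o.2) (occupation w1) ->
  all (fun o => o.1.2 <= o.2) (occupation w2) ->
  (forall v tau, occupied (occupation w1) v tau -> ~~ occupied (occupation w2) v tau) ->
  temporally_disjoint w1 w2.
Proof.
move=> /allP ord1 /allP ord2 no_common o1 o2 o1_w1 o2_w2 same_v [lo12 lo21].
have := ord1 o1 o1_w1; have := ord2 o2 o2_w2 => ord_o2 ord_o1.
set tau := maxn o1.1.2 o2.1.2.
have in_w1 : occupied (occupation w1) o1.1.1 tau.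
  by apply/hasP; exists o1; rewrite // eqxx leq_maxl geq_max ord_o1 lo21.
have in_w2 : occupied (occupation w2) o1.1.1 tau.
  by apply/hasP; exists o2; rewrite // same_v eqxx leq_maxr geq_max ord_o2 lo12.
by have /negP := no_common _ _ in_w1.
Qed.

Lemma touches_between (w : seq (transition V)) a t tau :
  occupied (occupation w) a tau -> ~~ occupied (occupation w) a t -> t < tau ->
  exists2 x, x \in w & touches a x && (t < tr_time x <= tau).
Proof.
case/hasP=> o o_w /andP[/eqP o_a /andP[lo hi]] not_at_t t_tau.
have [x x_w /andP[/eqP x_time x_a]] := occupation_entry o_w.
exists x; rewrite // -o_a x_a x_time lo andbT ltnNge.
apply: contra not_at_t => lo_t; apply/hasP; exists o; rewrite // o_a eqxx lo_t.
exact: leq_trans (ltnW t_tau) hi.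
Qed.

(* For p = [::] the occupation of p ++ q starts only at the first departure
   of q, so it is covered by, but not equal to, the stays entered at time t. *)
Lemma occupation_cut_entry (e0 : transition V) (p q : seq (transition V)) a b t t' :
  step (last e0 p) (a, b, t) -> path step (a, b, t) ((b, a, t') :: q) ->
  exists e, [/\ tr_tgt (last e p) = a, tr_time (last e p) <= t,
    occupation (p ++ (a, b, t) :: (b, a, t') :: q)
      = stays e (p ++ (a, b, t) :: (b, a, t') :: q) &
    forall u tau, occupied (occupation (p ++ q)) u tau -> occupied (stays e (p ++ q)) u tau].
Proof.
case: p => [_ | x p' /andP[/eqP into_a /ltnW into_t]] out_of.
  exists (a, a, t); split=> //; first by rewrite cat0s occupation_stays.
  case: q out_of => [|y q'] // /and3P[/andP[_ t_t'] /andP[/eqP y_a t'_y] _] u tau.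
  rewrite cat0s occupation_stays; apply: occupied_stays_entry => //=.
  exact: leq_trans (ltnW t_t') (ltnW t'_y).
exists (tr_src x, tr_src x, tr_time x); split=> //; first by rewrite cat_cons occupation_stays.
by move=> u tau; rewrite cat_cons occupation_stays.
Qed.

Section BackAndForth.
Variables (s z a b : V) (t t' : nat) (p q : seq (transition V)).
Local Notation w := (p ++ (a, b, t) :: (b, a, t') :: q).
Hypothesis walk_w : temporal_walk T E s z w.

Lemma step_into_cut : step (last (s, s, 0) p) (a, b, t).
Proof.
by case/temporal_walkE: walk_w => _; rewrite cat_path /= => /and3P[].
Qed.

Lemma step_out_of_cut : path step (a, b, t) ((b, a, t') :: q).
Proof.
by case/temporal_walkE: walk_w => _; rewrite cat_path /= => /and3P[].
Qed.

Lemma walk_cut : temporal_walk T E s z (p ++ q).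
Proof.
have /andP[/eqP into_a _] := step_into_cut.
case/temporal_walkE: walk_w => valid hpath <-; apply/temporal_walkE; split.
- by move: valid; rewrite !all_cat /= => /and4P[-> _ _ ->].
- apply: path_cut2 hpath => u v; rewrite /step /=.
  move=> /andP[/eqP -> ut] /andP[_ tt'] /andP[/eqP <- t'v].
  by rewrite eqxx (ltn_trans ut (ltn_trans tt' t'v)).
- by rewrite !last_cat; case: q {valid hpath}.
Qed.

Lemma occupied_at_cut : occupied (occupation w) a t.
Proof.
have [e [e_a e_t -> _]] := occupation_cut_entry step_into_cut step_out_of_cut.
by have := @occupied_stays_cat e (a, b, t) p ((b, a, t') :: q) e_t; rewrite e_a.
Qed.

Lemma occupied_after_cut u tau :
  occupied (occupation (p ++ q)) u tau ->
  occupied (occupation w) u tau || [&& u == a, t < tau & tau < t'].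
Proof.
have [e [e_a e_t -> in_e]] := occupation_cut_entry step_into_cut step_out_of_cut.
by move=> /in_e /(occupied_stays_cut b t' e_a e_t).
Qed.

Lemma temporally_disjoint_cut s2 z2 w2 :
  temporal_walk T E s2 z2 w2 -> temporally_disjoint w w2 ->
  ~~ has (fun x => touches a x && (t < tr_time x < t')) w2 ->
  temporally_disjoint (p ++ q) w2.
Proof.
move=> walk_w2 disj no_touch.
apply: occupied_temporally_disjoint; first exact: occupation_ordered walk_cut.
  exact: occupation_ordered walk_w2.
move=> u tau /occupied_after_cut /orP[in_w | /and3P[/eqP -> t_tau tau_t']].
  exact: occupied_disjoint disj in_w.
apply/negP => in_w2.
have not_at_t := occupied_disjoint disj occupied_at_cut.
have [x x_w2 /and3P[x_a t_x x_tau]] := touches_between in_w2 not_at_t t_tau.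
case/negP: no_touch; apply/hasP; exists x; rewrite // x_a t_x.
exact: leq_ltn_trans x_tau tau_t'.
Qed.

End BackAndForth.

Lemma temporally_disjoint_sym (w1 w2 : seq (transition V)) :
  temporally_disjoint w1 w2 -> temporally_disjoint w2 w1.
Proof.
move=> disj o2 o1 o2_w2 o1_w1 same_v [lo21 lo12].
exact: disj o1 o2 o1_w1 o2_w2 (esym same_v) (conj lo12 lo21).
Qed.

Lemma tdw_solutionE (d : V * V) S sol :
  tdw_solution T E S sol <->
  [/\ size sol = size S,
      forall i, i < size sol ->
        temporal_walk T E (nth d S i).1 (nth d S i).2 (nth [::] sol i) &
      forall i j, i < size sol -> j < size sol -> i != j ->
        temporally_disjoint (nth [::] sol i) (nth [::] sol j)].
Proof.
split=> [[size_sol [walks disj]] | [size_sol walks disj]]; split=> //.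
- move=> i lt_i; apply: walks; rewrite -nth_zip ?size_sol //.
  by apply: mem_nth; rewrite size_zip -size_sol minnn.
- by move=> i j lt_i lt_j /eqP; apply: disj; rewrite -size_sol.
- split=> [sz w /(nthP (d, [::]))[i] | i j lt_i lt_j /eqP].
    rewrite size_zip size_sol minnn nth_zip // => lt_i [<- <-].
    by apply: walks; rewrite size_sol.
  by apply: disj; rewrite size_sol.
Qed.

Lemma tdw_solution_set_nth (d : V * V) S sol i w :
  tdw_solution T E S sol -> i < size sol ->
  temporal_walk T E (nth d S i).1 (nth d S i).2 w ->
  (forall j, j < size sol -> j != i -> temporally_disjoint w (nth [::] sol j)) ->
  tdw_solution T E S (set_nth [::] sol i w).
Proof.
move=> /(tdw_solutionE d)[size_sol walks disj] lt_i walk_w disj_w.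
have size' : size (set_nth [::] sol i w) = size sol.
  by rewrite size_set_nth; apply/maxn_idPr.
apply/(tdw_solutionE d); rewrite size'; split=> // [j lt_j | j1 j2 lt_j1 lt_j2].
  by rewrite nth_set_nth /=; case: eqP => [-> | _]; [exact: walk_w | exact: walks].
rewrite !nth_set_nth /=; have [e1 | ne1] := eqVneq j1 i; have [e2 | ne2] := eqVneq j2 i.
- by rewrite e1 e2 eqxx.
- by move=> _; exact: disj_w.
- by move=> _; apply: temporally_disjoint_sym; exact: disj_w.
- exact: disj.
Qed.

Lemma tdw_solution_cut S sol i a b t t' (p q : seq (transition V)) :
  tdw_solution T E S sol -> i < size sol ->
  nth [::] sol i = p ++ (a, b, t) :: (b, a, t') :: q ->
  ~~ has (has (fun x => touches a x && (t < tr_time x < t'))) sol ->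
  tdw_solution T E S (set_nth [::] sol i (p ++ q)).
Proof.
move=> sol_ok lt_i w_cut no_touch.
have /(tdw_solutionE (a, a))[_ walks disj] := sol_ok.
have walk_w := walks i lt_i; rewrite w_cut in walk_w.
apply: (tdw_solution_set_nth sol_ok lt_i (walk_cut walk_w)) => j lt_j ne_ji.
apply: (temporally_disjoint_cut walk_w (walks j lt_j)).
  by rewrite -w_cut; apply: disj => //; rewrite eq_sym.
apply: contra no_touch => touch; apply/hasP; exists (nth [::] sol j) => //.
exact: mem_nth.
Qed.

Lemma total_length_set_nth (sol : seq (seq (transition V))) i w : i < size sol ->
  total_length (set_nth [::] sol i w) + size (nth [::] sol i) = total_length sol + size w.
Proof.
rewrite /total_length; elim: sol i => [|w' sol IH] [|i] //= lt_i; first by lia.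
by have := IH i lt_i; lia.
Qed.

End TemporalWalks.

Theorem mainTheorem6 (V : finType) (T : nat) (E : nat -> {set {set V}})
    (S : seq (V * V)) (sol : seq (seq (transition V))) :
  temporal_line T E ->
  tdw_solution T E S sol ->
  (forall sol', tdw_solution T E S sol' -> total_length sol <= total_length sol') ->
  forall (i k : nat) (a b : V) (t t' : nat),
    i < size sol ->
    k.+1 < size (nth [::] sol i) ->
    nth (a, b, t) (nth [::] sol i) k = (a, b, t) ->
    nth (a, b, t) (nth [::] sol i) k.+1 = (b, a, t') ->
    t < t' ->
    exists j (c : V) (t'' : nat),
      j < size sol /\ t < t'' < t' /\
      ((c, a, t'') \in nth [::] sol j \/ (a, c, t'') \in nth [::] sol j).
Proof.
move=> _ sol_ok minimal i k a b t t' lt_i lt_k kth k1th _.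
pose between x := touches a x && (t < tr_time x < t').
have [/hasP[w /(nthP [::])[j lt_j <-] /hasP[[[u v] t''] x_w /andP[x_a x_t]]] | no_touch] :=
  boolP (has (has between) sol).
  exists j; rewrite /touches /= in x_a x_t.
  by case/orP: x_a => /eqP <-; [exists v | exists u]; exists t''; do !split=> //; [right | left].
exfalso; set w := nth [::] sol i in lt_k kth k1th.
have w_cut := cat_take_nth2_drop (a, b, t) lt_k; rewrite kth k1th in w_cut.
set p := take k w in w_cut; set q := drop k.+2 w in w_cut.
have := minimal _ (tdw_solution_cut sol_ok lt_i w_cut no_touch).
have := total_length_set_nth (p ++ q) lt_i.
by rewrite -/w w_cut !size_cat /=; lia.
Qed.
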